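(* The $q$-central Delannoy numbers $D_n(q)=\sum_{k=0}^n\binom{n+k}{n-k}\binom{2k}{k}q^{n-k}$, $n\ge 0$, form a $q$-log-convex sequence.
   Context: For real polynomials $f,g$ write $f\le_q g$ if $g-f$ has nonnegative coefficients; a sequence $\{P_n(q)\}_{n\ge0}$ is $q$-log-convex if $P_n(q)^2\le_q P_{n-1}(q)P_{n+1}(q)$ for all $n\ge 1$. *)

From mathcomp Require Import all_boot all_order all_algebra.
Set Implicit Arguments. Unset Strict Implicit. Unset Printing Implicit Defensive.
Import Order.TTheory GRing.Theory Num.Theory.
Local Open Scope ring_scope.

Definition q_le (R : realDomainType) (f g : {poly R}) : Prop :=
  forall i : nat, 0 <= (g - f)`_i.

Definition q_log_convex (R : realDomainType) (P : nat -> {poly R}) : Prop :=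
  forall n : nat, (1 <= n)%N -> q_le (P n ^+ 2) (P n.-1 * P n.+1).

Definition qDelannoy (R : realDomainType) (n : nat) : {poly R} :=
  \sum_(0 <= k < n.+1) ('C(n + k, n - k) * 'C(k.*2, k))%:R *: 'X^(n - k).

From mathcomp Require Import all_boot all_order all_algebra.
From mathcomp Require Import ring zify.
Set Implicit Arguments. Unset Strict Implicit. Unset Printing Implicit Defensive.
Import Order.TTheory GRing.Theory Num.Theory.

(* The coefficient of q^(n-k) in D_n is C(n,k) C(n+k,k), and the ratio
   identities of these numbers give the three-term recurrence
   (n+2) D_(n+2) = (2n+3) (q+2) D_(n+1) - (n+1) q^2 D_n.
   For U_n = 2 (q+2) D_n D_(n+1) - q^2 D_n^2 - D_(n+1)^2 the recurrence yields
   (n+2)^2 U_(n+1) = (n+1)^2 q^2 U_n + 4 (2n+3) (q+1) D_(n+1)^2 with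
   U_0 = 4 (q+1), so U_n has nonnegative coefficients.  The scaled defect
   F_m = (m+1) (m+2) (D_m D_(m+2) - D_(m+1)^2) then satisfies F_0 = U_0 and
   F_(m+1) = q^2 F_m + (m+2) U_(m+1), so it is nonnegative too. *)

Lemma mul_bin_bin n m k : k <= m <= n ->
  'C(n, m) * 'C(m, k) = 'C(n, k) * 'C(n - k, m - k).
Proof.
case/andP=> le_km le_mn.
have facts_gt0 : 0 < k`! * (m - k)`! * (n - m)`! by rewrite !muln_gt0 !fact_gt0.
apply/eqP; rewrite -(eqn_pmul2r facts_gt0); apply/eqP.
transitivity ('C(n, m) * ('C(m, k) * (k`! * (m - k)`!)) * (n - m)`!); first ring.
rewrite bin_fact // -mulnA bin_fact //.
have := bin_fact (leq_sub2r k le_mn).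
rewrite (_ : n - k - (m - k) = n - m); last by lia.
move=> binE.
transitivity ('C(n, k) * ('C(n - k, m - k) * ((m - k)`! * (n - m)`!)) * k`!); last ring.
by rewrite binE mulnAC -mulnA bin_fact // (leq_trans le_km le_mn).
Qed.

Definition delannoy_coef n k := 'C(n, k) * 'C(n + k, k).

Lemma bin_delannoy n k : k <= n ->
  'C(n + k, n - k) * 'C(k.*2, k) = delannoy_coef n k.
Proof.
move=> le_kn; rewrite /delannoy_coef.
have -> : 'C(n + k, n - k) = 'C(n + k, k.*2).
  by rewrite -bin_sub; [congr 'C(_, _) | ]; lia.
rewrite mul_bin_bin; last by apply/andP; split; lia.
have -> : n + k - k = n by lia.
have -> : k.*2 - k = k by lia.
exact: mulnC.
Qed.

Lemma delannoy_coef_small n k : n < k -> delannoy_coef n k = 0.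
Proof. by move=> lt_nk; rewrite /delannoy_coef bin_small. Qed.

Lemma delannoy_coef0 n : delannoy_coef n 0 = 1.
Proof. by rewrite /delannoy_coef !bin0. Qed.

Lemma mul_delannoy_coefSn n k :
  (n.+1 - k) * delannoy_coef n.+1 k = (n + k).+1 * delannoy_coef n k.
Proof.
have binE1 := mul_bin_down n.+1 k.
have binE2 := mul_bin_down (n + k).+1 k.
rewrite /= (_ : (n + k).+1 - k = n.+1) in binE1 binE2; last by lia.
rewrite /delannoy_coef addSn mulnA -binE1.
transitivity ('C(n, k) * (n.+1 * 'C((n + k).+1, k))); first ring.
by rewrite -binE2; ring.
Qed.

Lemma mul_delannoy_coefnS n k :
  (n + k).+1 * (n - k) * delannoy_coef n k = k.+1 ^ 2 * delannoy_coef n k.+1.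
Proof.
rewrite /delannoy_coef addnS.
transitivity (((n - k) * 'C(n, k)) * ((n + k).+1 * 'C(n + k, k))); first ring.
rewrite -mul_bin_left (mul_bin_diag (n + k).+1); ring.
Qed.

Lemma delannoy_coef_rec_le n k : k <= n ->
  n.+2 * delannoy_coef n.+2 k.+1 + n.+1 * delannoy_coef n k.+1
  = n.*2.+3 * (delannoy_coef n.+1 k.+1 + 2 * delannoy_coef n.+1 k).
Proof.
move=> le_kn; have [m ->] : exists m, n = k + m by exists (n - k); lia.
set A := delannoy_coef (k + m) k.+1; set B := delannoy_coef (k + m).+1 k.+1.
set C := delannoy_coef (k + m).+2 k.+1; set P := delannoy_coef (k + m).+1 k.
have BA : m * B = (k + k + m).+2 * A.
  have := mul_delannoy_coefSn (k + m) k.+1.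
  by rewrite (_ : (k + m).+1 - k.+1 = m) 1?(_ : (k + m + k.+1).+1 = (k + k + m).+2); lia.
have CB : m.+1 * C = (k + k + m).+3 * B.
  have := mul_delannoy_coefSn (k + m).+1 k.+1.
  by rewrite (_ : (k + m).+2 - k.+1 = m.+1) 1?(_ : ((k + m).+1 + k.+1).+1 = (k + k + m).+3); lia.
have PB : (k + k + m).+2 * m.+1 * P = k.+1 ^ 2 * B.
  by rewrite -mul_delannoy_coefnS; congr (_ * _ * _); lia.
have pos : 0 < (k + k + m).+2 * m.+1 by [].
apply/eqP; rewrite -(eqn_pmul2l pos); apply/eqP.
transitivity ((k + k + m).+2 * (k + m).+2 * (m.+1 * C)
  + m.+1 * (k + m).+1 * ((k + k + m).+2 * A)); first ring.
rewrite CB -BA.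
transitivity ((k + m).*2.+3
  * ((k + k + m).+2 * m.+1 * B + 2 * ((k + k + m).+2 * m.+1 * P))); last ring.
rewrite PB (_ : (k + m).*2 = k + m + (k + m)); [ring | lia].
Qed.

Lemma delannoy_coef_rec n k :
  n.+2 * delannoy_coef n.+2 k.+1 + n.+1 * delannoy_coef n k.+1
  = n.*2.+3 * (delannoy_coef n.+1 k.+1 + 2 * delannoy_coef n.+1 k).
Proof.
have [le_kn | lt_nk] := leqP k n; first exact: delannoy_coef_rec_le.
have [-> | neq_kSn] := eqVneq k n.+1; last first.
  by rewrite !delannoy_coef_small //; lia.
rewrite (@delannoy_coef_small n) // (@delannoy_coef_small n.+1) //.
have CB := mul_delannoy_coefSn n.+1 n.+1.
have DC := mul_delannoy_coefnS n.+2 n.+1.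
rewrite subSnn in CB DC.
apply/eqP; rewrite -(eqn_pmul2l (ltn0Sn n.+1)); apply/eqP.
transitivity (n.+2 ^ 2 * delannoy_coef n.+2 n.+2); first ring.
rewrite -DC (_ : n.*2 = n + n); last by lia.
by rewrite -[_ * 1 * _]mulnA CB !addSn !addnS; ring.
Qed.

Local Open Scope ring_scope.

Lemma polyOver_nneg_natrMK (R : numDomainType) k (p : {poly R}) :
  k.+1%:R * p \is a polyOver Num.Def.nneg_num_pred ->
  p \is a polyOver Num.Def.nneg_num_pred.
Proof.
move=> /polyOverP kp; apply/polyOverP => i.
by have := kp i; rewrite -!topredE /= mulr_natl coefMn pmulrn_lge0.
Qed.

Section QDelannoy.

Variable R : realDomainType.
Local Notation D := (@qDelannoy R).

Lemma coef_qDelannoy n i :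
  (D n)`_i = if (i <= n)%N then (delannoy_coef n (n - i))%:R else 0.
Proof.
rewrite /qDelannoy coef_sum.
under eq_bigr => k _ do rewrite coefZ coefXn.
case: ifP => le_in.
  rewrite (bigD1_seq (n - i)%N) ?iota_uniq ?mem_index_iota /= ?ltnS ?leq_subr //.
  rewrite bin_delannoy ?leq_subr // subKn // eqxx mulr1 big1_seq ?addr0 //.
  move=> k /andP[neq_k]; rewrite mem_index_iota => lt_k.
  by rewrite (_ : (i == n - k)%N = false) ?mulr0 //; apply/eqP; move/eqP: neq_k; lia.
rewrite big1_seq // => k; rewrite mem_index_iota => lt_k.
by rewrite (_ : (i == n - k)%N = false) ?mulr0 //; apply/eqP; move/negbT: le_in; lia.
Qed.

Lemma coef_XnM_qDelannoy m n i : ('X^m * D n)`_i =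
  if (i <= n + m)%N then (delannoy_coef n (n + m - i))%:R else 0.
Proof.
rewrite coefXnM coef_qDelannoy.
have [lt_im | le_mi] := ltnP i m; first by rewrite delannoy_coef_small ?ifT //; lia.
by rewrite (_ : n - (i - m) = n + m - i)%N; [congr (if _ then _ else _); lia | lia].
Qed.

Lemma qDelannoy_recD n :
  n.+2%:R * D n.+2 + n.+1%:R * ('X^2 * D n) = n.*2.+3%:R * (('X + 2) * D n.+1).
Proof.
rewrite [(_ + 2) * _]mulrDl -['X * _]/('X^1 * _).
apply/polyP => i; rewrite !mulr_natl coefD !coefMn coefD coefMn.
rewrite !coef_XnM_qDelannoy !coef_qDelannoy addn2 addn1.
have [lt_i | le_i] := ltnP n.+2 i.
  have out : (i <= n.+1)%N = false by rewrite leqNgt ltnW.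
  by rewrite (ifF _ _ out) !mul0rn !addr0 mul0rn.
have [le_iSn | gt_iSn] := leqP i n.+1.
  rewrite subSn // -!mulrnA -!natrD -mulrnA; congr _%:R.
  by rewrite [(_ * n.+2)%N]mulnC [(_ * n.+1)%N]mulnC delannoy_coef_rec; ring.
have -> : i = n.+2 by lia.
rewrite subnn !delannoy_coef0 mul0rn addr0 -!mulrnA -natrD; congr _%:R; lia.
Qed.

Lemma qDelannoy_rec n :
  n.+2%:R * D n.+2 = n.*2.+3%:R * (('X + 2) * D n.+1) - n.+1%:R * ('X^2 * D n).
Proof. by rewrite -qDelannoy_recD addrK. Qed.

Lemma qDelannoy0 : D 0 = 1.
Proof. by apply/polyP => i; rewrite coef_qDelannoy coefC; case: i. Qed.

Lemma qDelannoy1 : D 1 = 'X + 2.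
Proof.
apply/polyP => i; rewrite coef_qDelannoy coefD coefX -[2]/(2%:R) -polyC_natr coefC.
by case: i => [|[|i]]; rewrite /delannoy_coef /= ?addr0 ?add0r.
Qed.

Local Notation nneg_poly := (polyOver (@Num.Def.nneg_num_pred R)).

Lemma qDelannoy_nneg n : D n \is a nneg_poly.
Proof.
by apply/polyOverP => i; rewrite -topredE /= coef_qDelannoy; case: ifP.
Qed.

Definition delannoy_form n :=
  2 * ('X + 2) * D n * D n.+1 - 'X^2 * D n ^+ 2 - D n.+1 ^+ 2.

Lemma delannoy_form0 : delannoy_form 0 = 4 * ('X + 1).
Proof. by rewrite /delannoy_form qDelannoy0 qDelannoy1; ring. Qed.

Lemma delannoy_formS n : n.+2%:R ^+ 2 * delannoy_form n.+1 =
  n.+1%:R ^+ 2 * ('X^2 * delannoy_form n)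
  + n.*2.+3%:R * 4 * ('X + 1) * D n.+1 ^+ 2.
Proof.
rewrite /delannoy_form.
transitivity (2 * ('X + 2) * D n.+1 * (n.+2%:R * D n.+2) * n.+2%:R
  - 'X^2 * n.+2%:R ^+ 2 * D n.+1 ^+ 2 - (n.+2%:R * D n.+2) ^+ 2); first ring.
by rewrite qDelannoy_rec (_ : n.*2 = n + n)%N; [ring | lia].
Qed.

Lemma delannoy_form_nneg n : delannoy_form n \is a nneg_poly.
Proof.
have X1_nneg : 'X + 1 \is a nneg_poly by rewrite rpredD ?polyOverX ?rpred1.
elim: n => [|n IHn]; first by rewrite delannoy_form0 rpredM ?rpred_nat.
apply: (@polyOver_nneg_natrMK _ (n.+2 ^ 2).-1).
rewrite prednK ?expn_gt0 // natrX delannoy_formS.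
by rewrite rpredD ?rpredM ?rpredX ?rpred_nat ?polyOverX ?qDelannoy_nneg.
Qed.

Definition log_convexity_defect m :=
  (m.+1 * m.+2)%:R * (D m * D m.+2 - D m.+1 ^+ 2).

Lemma log_convexity_defect0 : log_convexity_defect 0 = delannoy_form 0.
Proof.
rewrite /log_convexity_defect /delannoy_form.
transitivity (D 0 * (2%:R * D 2) - 2%:R * D 1 ^+ 2); first ring.
by rewrite qDelannoy_rec qDelannoy0 qDelannoy1 (_ : 0.*2.+3 = 3)%N //; ring.
Qed.

Lemma log_convexity_defectS m : log_convexity_defect m.+1 =
  'X^2 * log_convexity_defect m + m.+2%:R * delannoy_form m.+1.
Proof.
have recS := qDelannoy_rec m.+1.
have rec0 : m.+1%:R * ('X^2 * D m) =
    m.*2.+3%:R * (('X + 2) * D m.+1) - m.+2%:R * D m.+2.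
  by rewrite qDelannoy_rec; ring.
rewrite /log_convexity_defect /delannoy_form.
transitivity (m.+2%:R * D m.+1 * (m.+3%:R * D m.+3)
  - m.+2%:R * m.+3%:R * D m.+2 ^+ 2); first ring.
rewrite recS.
transitivity (m.+2%:R * D m.+2 * (m.+1%:R * ('X^2 * D m))
  - m.+1%:R * m.+2%:R * 'X^2 * D m.+1 ^+ 2
  + m.+2%:R * (2 * ('X + 2) * D m.+1 * D m.+2
               - 'X^2 * D m.+1 ^+ 2 - D m.+2 ^+ 2)); last ring.
rewrite rec0 (_ : m.+1.*2 = (m + m).+2)%N; last by lia.
by rewrite (_ : m.*2 = m + m)%N; [ring | lia].
Qed.

Lemma log_convexity_defect_nneg m : log_convexity_defect m \is a nneg_poly.
Proof.
have X2_nneg : 'X^2 \is a nneg_poly by rewrite rpredX ?polyOverX.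
elim: m => [|m IHm]; first by rewrite log_convexity_defect0 delannoy_form_nneg.
rewrite log_convexity_defectS rpredD ?(rpredM X2_nneg) //.
by rewrite rpredM ?rpred_nat ?delannoy_form_nneg.
Qed.

End QDelannoy.

Theorem corollary4p11 (R : realDomainType) : q_log_convex (@qDelannoy R).
Proof.
move=> [|m] // _ i.
have := log_convexity_defect_nneg R m.
rewrite /log_convexity_defect -[(m.+1 * m.+2)%N]prednK ?muln_gt0 //.
by move=> /polyOver_nneg_natrMK /polyOverP /(_ i); rewrite -topredE.
Qed.
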